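(* Let $k$ be a square-free positive integer and $d$ a positive integer. Then $$e^*_k(d^2)=k^2\sum_{m\mid k}\mu(m)\Bigl(\prod_{p\mid m,\ p\text{ prime}}\frac{p^2-1}{p^2+1}\Bigr)e^*_1(d_m^2),$$ where $d_m=\max\{x\mid d:\gcd(x,m)=1\}=d/\prod_{p\mid m}p^{\nu_p(d)}$.
   Context: $\nu_p$ is the $p$-adic valuation and $\mu$ the Möbius function. For a positive integer $d$, define $\gamma_c(d^2)$ for $c\ge1$ as the multiplicative function of $c$ (i.e. $\gamma_{c}(d^2)=\prod_{p^r\| c}\gamma_{p^r}(d^2)$, $\gamma_1=1$) with: for $p=2$, $\gamma_{2^r}(d^2)=2^{r/2}$ if $r\ge2$ is even and $\nu_2(d^2)=r-2$; $=2^{(r-1)/2}$ if $r$ is odd and $\nu_2(d^2)\ge r-1$; $=0$ otherwise. For $p$ odd, $\gamma_{p^r}(d^2)=p^{r/2-1}(p-1)$ if $r\ge2$ is even and $\nu_p(d^2)\ge r$; $=p^{(r-1)/2}$ if $r$ is odd and $\nu_p(d^2)=r-1$; $=0$ otherwise. For a positive integer $k$, $e^*_k(d^2)=\sum_{c=1}^\infty\frac{\gcd(c,2k)^2}{c^2}\gamma_c(d^2)$ (absolutely convergent). *)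

From Stdlib Require Import Reals ClassicalEpsilon.
From mathcomp Require Import all_boot.

Set Implicit Arguments. Unset Strict Implicit. Unset Printing Implicit Defensive.

(* gamma_{p^r}(n) for a prime p, exponent r >= 1, n = d^2 *)
Definition gamma_pp (p r n : nat) : nat :=
  if p == 2 then
    (if (2 <= r) && ~~ odd r && (logn 2 n == r - 2) then 2 ^ (r./2)
     else if odd r && (r - 1 <= logn 2 n) then 2 ^ ((r - 1)./2)
     else 0)
  else
    (if (2 <= r) && ~~ odd r && (r <= logn p n) then p ^ (r./2 - 1) * (p - 1)
     else if odd r && (logn p n == r - 1) then p ^ ((r - 1)./2)
     else 0).

Definition gamma (c n : nat) : nat :=
  \prod_(p <- primes c) gamma_pp p (logn p c) n.

Definition estar_term (k d c : nat) : R :=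
  Rmult (Rdiv (pow (INR (gcdn c (2 * k))) 2) (pow (INR c) 2)) (INR (gamma c (d ^ 2))).

(* value of a convergent series sum_{i>=0} f i (0 if it does not converge) *)
Definition series_value (f : nat -> R) : R :=
  match excluded_middle_informative (exists l, infinite_sum f l) with
  | left H => proj1_sig (constructive_indefinite_description _ H)
  | right _ => R0
  end.

(* e*_k(d^2) = sum_{c >= 1} gcd(c,2k)^2/c^2 gamma_c(d^2) *)
Definition estar (k d : nat) : R := series_value (fun i => estar_term k d i.+1).

Definition squarefree (m : nat) : bool := all (fun p => logn p m == 1) (primes m).
Definition mobius (m : nat) : R :=
  if squarefree m then pow (Ropp R1) (size (primes m)) else R0.

Definition d_part (d m : nat) : nat := d %/ \prod_(p <- primes m) p ^ logn p d.

Definition prime_factor_prod (m : nat) : R :=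
  foldr Rmult R1
    (map (fun p => Rdiv (Rminus (pow (INR p) 2) R1) (Rplus (pow (INR p) 2) R1)) (primes m)).

From Stdlib Require Import Reals.
From mathcomp Require Import all_boot.
From HB Require Import structures.
From Stdlib Require Import Lra ClassicalEpsilon.
From mathcomp Require Import zify.
Set Implicit Arguments. Unset Strict Implicit. Unset Printing Implicit Defensive.

(* Write e*_k(x^2) as the series of t_k(c) = gcd(c,2k)^2/c^2 gamma_c(x^2).
   1. Arithmetic of gamma and d_m: gamma_c is multiplicative in c, depends
      only on the valuations of x^2 at the primes of c, and is at most 4x^2,
      so t_k(c) = O(1/c^2) and every series converges; d_m is the
      pi(m)'-part of d.
   2. Euler factorisation at a prime p: t_k(p^r b) = phi(r) t_k(b) for p not
      dividing b, with phi(r) = 0 for r > nu_p(x^2) + 2, hence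
      e*_k(x^2) = (sum_r phi(r)) * (sum of t_k over the b prime to p).
   3. For p prime not dividing k, e*_k(d^2), e*_{pk}(d^2) and e*_k(d_p^2) have
      the same part prime to p, and comparing their finitely many local terms
      gives e*_{pk}(d^2) = p^2 (e*_k(d^2) - (p^2-1)/(p^2+1) e*_k(d_p^2)).
   4. The right-hand side satisfies the same recursion (the divisors of pk
      are the m and pm with m | k; mu, the product over p | m and m |-> d_m
      factor at p), both sides agree at k = 1, and induction on k concludes. *)

Lemma logn_partn q (pi : nat_pred) n :
  logn q n`_pi = if q \in pi then logn q n else 0.
Proof.
case: ifP => qpi.
  rewrite -logn_part partn_part ?logn_part // => x; rewrite !inE => /eqP ->.
  exact: qpi.
have [//|] := posnP (logn q n`_pi).
by rewrite logn_gt0 primes_part mem_filter qpi.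
Qed.

Lemma prod_primes_partn m M : \prod_(p <- primes m) p ^ logn p M = M`_\pi(m).
Proof.
rewrite (@widen_partn (maxn m M)) ?leq_maxr //.
by rewrite -(@filter_pi_of m (maxn m M).+1) ?ltnS ?leq_maxl // big_filter.
Qed.

Lemma d_partE d m : 0 < d -> d_part d m = d`_(\pi(m))^'.
Proof.
move=> d0; rewrite /d_part prod_primes_partn -{1}(partnC \pi(m) d0).
by rewrite mulKn.
Qed.

Lemma d_part_gt0 d m : 0 < d -> 0 < d_part d m.
Proof. by move=> d0; rewrite d_partE. Qed.

Lemma logn_d_part d m q : 0 < d ->
  logn q (d_part d m) = if q \in primes m then 0 else logn q d.
Proof.
move=> d0; rewrite d_partE // logn_partn.
by rewrite [q \in _]/(q \notin primes m); case: (q \in primes m).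
Qed.

Lemma gcdn_mul_coprime m n k : 0 < m -> 0 < n -> 0 < k -> coprime m n ->
  gcdn (m * n) k = gcdn m k * gcdn n k.
Proof.
move=> m0 n0 k0 cmn; apply: eqn_from_log => [||q].
- by rewrite gcdn_gt0 muln_gt0 m0 n0.
- by rewrite muln_gt0 !gcdn_gt0 m0 n0.
rewrite lognM ?gcdn_gt0 ?m0 ?n0 // !logn_gcd ?muln_gt0 ?m0 ?n0 // lognM //.
have [->|] := posnP (logn q m); first lia.
rewrite logn_gt0 mem_primes => /and3P[_ _ qm].
by rewrite (logn_coprime (coprime_dvdl qm cmn)); lia.
Qed.

Lemma gcdn_prime_pow p r s t : prime p -> 0 < t -> coprime p t ->
  gcdn (p ^ r) (p ^ s * t) = p ^ minn r s.
Proof.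
move=> pp t0 ct; have p0 := prime_gt0 pp.
apply: eqn_from_log; rewrite ?gcdn_gt0 ?expn_gt0 ?p0 // => q.
rewrite logn_gcd ?muln_gt0 ?expn_gt0 ?p0 ?t0 // lognM ?expn_gt0 ?p0 //.
rewrite !lognX logn_prime //; case: (eqVneq q p) => [->|_] /=; last lia.
by rewrite logn_coprime //; lia.
Qed.

Lemma primes_pow_mul p r b : prime p -> 0 < b -> coprime p b -> 0 < r ->
  perm_eq (primes (p ^ r * b)) (p :: primes b).
Proof.
move=> pp b0 cb r0; have pr0 : 0 < p ^ r by rewrite expn_gt0 prime_gt0.
have pnb : p \notin primes b by rewrite mem_primes pp b0 /= -prime_coprime.
apply: uniq_perm; first exact: primes_uniq.
  by rewrite /= pnb primes_uniq.
by move=> q; rewrite primesM // primesX // primes_prime // !in_cons in_nil orbF.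
Qed.

Lemma gamma_ext c n n' : {in primes c, forall q, logn q n = logn q n'} ->
  gamma c n = gamma c n'.
Proof.
by move=> E; apply: eq_big_seq => q /E; rewrite /gamma_pp; case: eqP => [->|_] ->.
Qed.

Lemma gamma_mul p r b n : prime p -> 0 < b -> coprime p b -> 0 < r ->
  gamma (p ^ r * b) n = gamma_pp p r n * gamma b n.
Proof.
move=> pp b0 cb r0; have pr0 : 0 < p ^ r by rewrite expn_gt0 prime_gt0.
rewrite /gamma (perm_big _ (primes_pow_mul pp b0 cb r0)) big_cons.
rewrite lognM // pfactorK // logn_coprime // addn0; congr (_ * _).
apply: eq_big_seq => q qb; have qp : q != p.
  by apply: contraTneq qb => ->; rewrite mem_primes pp b0 -prime_coprime.
by rewrite lognM // lognX logn_prime // (negbTE qp) muln0.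
Qed.

Lemma gamma_pp_le p r n : prime p -> 0 < n -> gamma_pp p r n <= p ^ logn p (4 * n).
Proof.
move=> pp n0; have p0 := prime_gt0 pp.
rewrite /gamma_pp lognM //; case: eqP => [->|p2].
  rewrite (_ : logn 2 4 = 2) //.
  case: ifP => [/andP[_ /eqP e]|_]; first by apply: leq_pexp2l => //; lia.
  by case: ifP => [/andP[_ e]|//]; apply: leq_pexp2l => //; lia.
rewrite (_ : logn p 4 = 0) ?add0n; last first.
  by rewrite (_ : 4 = 2 ^ 2) // lognX logn_prime //; move/eqP/negbTE: p2 => ->.
case: ifP => [/andP[/andP[r2 _] e]|_].
  apply: leq_trans (_ : p ^ (r./2 - 1) * p <= _).
    by rewrite leq_mul2l leq_subr orbT.
  by rewrite -expnSr; apply: leq_pexp2l => //; lia.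
by case: ifP => [/andP[_ /eqP e]|//]; apply: leq_pexp2l => //; lia.
Qed.

(* gamma_c(n) <= 4n uniformly in c: the terms of e*_k are O(1/c^2). *)
Lemma gamma_le c n : 0 < n -> gamma c n <= 4 * n.
Proof.
move=> n0; apply: leq_trans (_ : (4 * n)`_\pi(c) <= _); last first.
  by apply: dvdn_leq; rewrite ?muln_gt0 ?n0 ?dvdn_part.
rewrite -prod_primes_partn /gamma !big_seq; apply: leq_prod => q.
by rewrite mem_primes => /andP[qp _]; apply: gamma_pp_le.
Qed.

Lemma gamma_pp_vanish p r n : logn p n + 3 <= r -> gamma_pp p r n = 0.
Proof.
rewrite /gamma_pp; case: eqP => [->|_] H.
  case: ifP => [/andP[_ /eqP e]|_]; first lia.
  by case: ifP => [/andP[_ e]|//]; lia.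
case: ifP => [/andP[_ e]|_]; first lia.
by case: ifP => [/andP[_ /eqP e]|//]; lia.
Qed.

Open Scope R_scope.

Fixpoint sumR (f : nat -> R) (n : nat) : R :=
  match n with O => 0 | S n => sumR f n + f n end.

Definition psum (f : nat -> R) (N : nat) : R := sumR (fun i => f i.+1) N.

Lemma psum_S f N : psum f N.+1 = psum f N + f N.+1.
Proof. by []. Qed.

Lemma sumR_ext f g n : (forall i, f i = g i) -> sumR f n = sumR g n.
Proof. by move=> fg; elim: n => //= n ->; rewrite fg. Qed.

Lemma sumR_zero f n : (forall i, f i = 0) -> sumR f n = 0.
Proof. by move=> f0; elim: n => //= n ->; rewrite f0; lra. Qed.

Lemma sumR_plus f g n : sumR (fun i => f i + g i) n = sumR f n + sumR g n.
Proof. by elim: n => /= [|n ->]; lra. Qed.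

Lemma sumR_scal c f n : sumR (fun i => c * f i) n = c * sumR f n.
Proof. by elim: n => /= [|n ->]; lra. Qed.

Lemma sumR_shift f n : sumR f n.+1 = f 0%N + sumR (fun i => f i.+1) n.
Proof. by elim: n => /= [|n ->]; lra. Qed.

Lemma psum_dilate (a : nat) g N : (0 < a)%N ->
  psum (fun c => if (a %| c)%N then g (c %/ a)%N else 0) N = psum g (N %/ a).
Proof.
move=> a0; elim: N => [|N IH]; first by rewrite div0n.
rewrite psum_S IH (divnS N a0).
by case: (a %| N.+1)%N; rewrite /= ?add0n ?add1n ?psum_S //; lra.
Qed.

Lemma cv_const c : Un_cv (fun _ => c) c.
Proof. by move=> eps e0; exists 0%N => n _; rewrite /Rdist Rminus_diag Rabs_R0. Qed.

Lemma cv_scal (u : nat -> R) L c : Un_cv u L -> Un_cv (fun n => c * u n) (c * L).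
Proof. exact: CV_mult _ _ _ _ (cv_const c). Qed.

Lemma cv_div (u : nat -> R) L a : (0 < a)%N -> Un_cv u L -> Un_cv (fun N => u (N %/ a)%N) L.
Proof.
move=> a0 cvu eps e0; have [M HM] := cvu eps e0; exists (M * a)%N => n /leP hn.
by apply: HM; apply/leP; rewrite -(mulnK M a0) leq_div2r.
Qed.

(* sum_{c <= n} 1/c^2 <= 2, by the telescoping bound 2 - 1/n. *)
Lemma psum_inv_sq_le n : psum (fun c => 1 / INR c ^ 2) n <= 2.
Proof.
suff H m : psum (fun c => 1 / INR c ^ 2) m.+1 <= 2 - 1 / INR m.+1.
  case: n => [|n]; first by rewrite /psum /=; lra.
  have := H n; have : 0 < 1 / INR n.+1 by apply: Rdiv_lt_0_compat; [lra|apply: lt_0_INR; lia].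
  lra.
elim: m => [|m IH]; first by rewrite /psum /=; lra.
rewrite psum_S.
have x0 := pos_INR m; rewrite !S_INR in IH *; set x := INR m in IH x0 *.
have -> : 1 / (x + 1 + 1) ^ 2 =
  1 / (x + 1) - 1 / (x + 1 + 1) - 1 / ((x + 1) * (x + 1 + 1) ^ 2) by field; lra.
suff : 0 < 1 / ((x + 1) * (x + 1 + 1) ^ 2) by lra.
by apply: Rdiv_lt_0_compat; [lra|apply: Rmult_lt_0_compat; [lra|apply: pow_lt; lra]].
Qed.

Lemma psum_cv_of_bound (h : nat -> R) C :
  (forall c, (0 < c)%N -> 0 <= h c <= C / INR c ^ 2) -> exists L, Un_cv (psum h) L.
Proof.
move=> hb; have [L HL] : {L | Un_cv (psum h) L}; last by exists L.
have C0 : 0 <= C.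
  by have := hb 1%N isT; rewrite (_ : INR 1 ^ 2 = 1); [lra|rewrite /=; ring].
apply: growing_cv; first by move=> n; have := hb n.+1 isT; rewrite /psum /=; lra.
exists (C * 2) => _ [n ->]; apply: Rle_trans (_ : C * psum (fun c => 1 / INR c ^ 2) n <= _).
  elim: n => [|n IH]; first by rewrite /psum /=; lra.
  have := hb n.+1 isT; rewrite !psum_S /Rdiv Rmult_1_l; lra.
by apply: Rmult_le_compat_l => //; apply: psum_inv_sq_le.
Qed.

Lemma estar_of_cv k x L : Un_cv (psum (estar_term k x)) L -> estar k x = L.
Proof.
move=> cvL; have sumL : infinite_sum (fun i => estar_term k x i.+1) L.
  move=> eps e0; have [N HN] := cvL eps e0; exists N => n /leP hn.
  have -> : sum_f_R0 (fun i => estar_term k x i.+1) n = psum (estar_term k x) n.+1.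
    by elim: n {hn} => [|n IH] /=; rewrite ?IH /psum /=; lra.
  by apply: HN; apply/leP; lia.
rewrite /estar /series_value; case: excluded_middle_informative => [E|[]].
  by case: constructive_indefinite_description => l /= Hl; apply: uniqueness_sum Hl sumL.
by exists L.
Qed.

Definition coprime_part (p : nat) (h : nat -> R) (b : nat) : R :=
  if coprime p b then h b else 0.

(* Euler factorisation at a prime p: if f (p^r b) = phi r * h b for every b
   prime to p, and phi is supported on r < m, then the series of f converges
   to (sum_{r < m} phi r) times the sum of h over the integers prime to p.
   The proof peels off one power of p at a time: the terms prime to p
   contribute phi 0 * h, the others form a dilated copy of the series of
   c |-> f (p c). *)
Lemma euler_split p m : prime p -> forall (f h phi : nat -> R) L,
  (forall r, (m <= r)%N -> phi r = 0) ->
  (forall r b, (0 < b)%N -> coprime p b -> f (p ^ r * b)%N = phi r * h b) ->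
  Un_cv (psum (coprime_part p h)) L ->
  Un_cv (psum f) (sumR phi m * L).
Proof.
move=> pp; have p0 := prime_gt0 pp.
elim: m => [|m IH] f h phi L phi0 fE hL.
  have f0 c : (0 < c)%N -> f c = 0.
    move=> c0; have [b cb Ec] := pfactor_coprime pp c0.
    have b0 : (0 < b)%N by move: c0; rewrite Ec muln_gt0 => /andP[].
    by rewrite Ec mulnC fE ?phi0 //; lra.
  apply: (Un_cv_ext (fun _ => 0)); last by rewrite Rmult_0_l; apply: cv_const.
  by move=> n; rewrite /psum sumR_zero // => i; rewrite f0.
have cvp : Un_cv (psum (fun c => f (p * c)%N)) (sumR (fun r => phi r.+1) m * L).
  apply: (IH _ h) => // [r|r b b0 cb]; first exact: (phi0 r.+1).
  by rewrite mulnA -expnS fE.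
rewrite sumR_shift Rmult_plus_distr_r.
apply: (Un_cv_ext _ _ _ _ (CV_plus _ _ _ _ (cv_scal (phi 0%N) hL) (cv_div p0 cvp))).
move=> N; rewrite -psum_dilate // /psum -sumR_scal -sumR_plus.
apply: sumR_ext => i; rewrite /coprime_part prime_coprime //.
case: ifP => [/negbTE pi|/negbFE pi]; last by rewrite pi mulnC divnK //; lra.
by rewrite pi -[X in f X]mul1n -(expn0 p) fE // ?prime_coprime ?pi //; lra.
Qed.

Lemma INR_muln m n : INR (m * n)%N = INR m * INR n.
Proof. exact: mult_INR. Qed.

Lemma INR_expn m r : INR (m ^ r)%N = INR m ^ r.
Proof. by elim: r => // r IH; rewrite expnS INR_muln IH. Qed.

Lemma INR_expn_neq0 p r : (0 < p)%N -> INR (p ^ r) <> 0.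
Proof. by move=> p0; apply: not_0_INR; apply/eqP; rewrite -lt0n expn_gt0 p0. Qed.

(* The terms of e*_k(x^2) are O(1/c^2): gcd(c, 2k) <= 2k and gamma_c <= 4x^2. *)
Lemma estar_term_bound k x c : (0 < k)%N -> (0 < x)%N -> (0 < c)%N ->
  0 <= estar_term k x c <= INR ((2 * k) ^ 2 * (4 * x ^ 2))%N / INR c ^ 2.
Proof.
move=> k0 x0 c0; have c2 : 0 < INR c ^ 2 by apply: pow_lt; apply: lt_0_INR; lia.
have -> : estar_term k x c = INR (gcdn c (2 * k) ^ 2 * gamma c (x ^ 2))%N / INR c ^ 2.
  by rewrite /estar_term INR_muln INR_expn /Rdiv; ring.
split; first by apply: Rmult_le_pos; [apply: pos_INR|apply: Rlt_le; apply: Rinv_0_lt_compat].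
apply: Rmult_le_compat_r; first by apply: Rlt_le; apply: Rinv_0_lt_compat.
apply: le_INR; apply/leP; apply: leq_mul; last by apply: gamma_le; rewrite expn_gt0 x0.
by rewrite leq_exp2r // dvdn_leq ?dvdn_gcdr // muln_gt0 k0.
Qed.

Lemma coprime_part_estar_cv p k x : (0 < k)%N -> (0 < x)%N ->
  exists L, Un_cv (psum (coprime_part p (estar_term k x))) L.
Proof.
move=> k0 x0; apply: (@psum_cv_of_bound _ (INR ((2 * k) ^ 2 * (4 * x ^ 2))%N)) => c c0.
have [t0 tb] := estar_term_bound k0 x0 c0; rewrite /coprime_part; case: ifP => // _.
split; first lra.
apply: Rmult_le_pos; [apply: pos_INR|apply: Rlt_le; apply: Rinv_0_lt_compat].
by apply: pow_lt; apply: lt_0_INR; lia.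
Qed.

Definition local_term (p k x r : nat) : R :=
  if r == 0%N then 1 else
  INR (gcdn (p ^ r) (2 * k)) ^ 2 / INR (p ^ r) ^ 2 * INR (gamma_pp p r (x ^ 2)).

Lemma local_term0 p k x : local_term p k x 0 = 1.
Proof. by []. Qed.

Lemma estar_term_factor p k x r b : prime p -> (0 < k)%N -> (0 < b)%N -> coprime p b ->
  estar_term k x (p ^ r * b)%N = local_term p k x r * estar_term k x b.
Proof.
move=> pp k0 b0 pb; rewrite /local_term; case: posnP => [->|r0].
  by rewrite expn0 mul1n Rmult_1_l.
have pr0 : (0 < p ^ r)%N by rewrite expn_gt0 prime_gt0.
have INR_ne0 n : (0 < n)%N -> INR n <> 0 by move=> n0; apply: not_0_INR; lia.
rewrite /estar_term gcdn_mul_coprime ?muln_gt0 ?coprimeXl //.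
rewrite gamma_mul // !INR_muln; field.
by split; apply: INR_ne0.
Qed.

Lemma local_term_vanish p k x r : (logn p (x ^ 2) + 3 <= r)%N -> local_term p k x r = 0.
Proof.
move=> hr; rewrite /local_term; case: eqP => [r0|_]; first by move: hr; rewrite r0 addn3.
by rewrite gamma_pp_vanish // Rmult_0_r.
Qed.

Lemma estar_euler p k x m L : prime p -> (0 < k)%N -> (logn p (x ^ 2) + 3 <= m)%N ->
  Un_cv (psum (coprime_part p (estar_term k x))) L ->
  estar k x = sumR (local_term p k x) m * L.
Proof.
move=> pp k0 hm cvL; apply: estar_of_cv; apply: (euler_split pp _ _ cvL).
  by move=> r hr; apply: local_term_vanish; apply: leq_trans hr.
by move=> r b b0 pb; apply: estar_term_factor.
Qed.

Definition local_ratio (p : nat) : R := (INR p ^ 2 - 1) / (INR p ^ 2 + 1).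

(* Local factors at an odd prime p not dividing k: passing from k to pk
   multiplies every term with r >= 1 by p^2, while for y prime to p only
   r = 0, 1 contribute, with total 1 + 1/p^2 = (p^2 + 1)/p^2. *)
Lemma local_sum_odd p k x y m : prime p -> p != 2%N -> (0 < k)%N -> ~~ (p %| k) ->
  logn p (y ^ 2) = 0%N ->
  sumR (local_term p (p * k) x) m.+3 =
  INR p ^ 2 * (sumR (local_term p k x) m.+3 - local_ratio p * sumR (local_term p k y) m.+3).
Proof.
move=> pp p2 k0 pk py; have p0 := prime_gt0 pp.
have pn0 : INR p <> 0 by apply: not_0_INR; lia.
have c2k : coprime p (2 * k).
  rewrite prime_coprime // Euclid_dvdM // negb_or pk andbT.
  by apply: contra p2 => /(@dvdn_leq p 2 isT) p_le2; have := prime_gt1 pp; lia.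
have g_k r : gcdn (p ^ r) (2 * k) = 1%N by apply/eqP; apply: coprimeXl.
have g_pk r : gcdn (p ^ r.+1) (2 * (p * k)) = p.
  rewrite (_ : (2 * (p * k) = p ^ 1 * (2 * k))%N); last by rewrite expn1 mulnCA.
  by rewrite gcdn_prime_pow ?muln_gt0 ?k0 // (_ : minn r.+1 1 = 1%N) ?expn1 //; lia.
have scale r : local_term p (p * k) x r.+1 = INR p ^ 2 * local_term p k x r.+1.
  by rewrite /local_term /= g_pk g_k /=; field; apply: INR_expn_neq0.
have y1 : local_term p k y 1 = 1 / INR p ^ 2.
  by rewrite /local_term /= g_k /gamma_pp (negbTE p2) py /= expn1; field.
have y2 : local_term p k y 2 = 0 by rewrite /local_term /= /gamma_pp (negbTE p2) py /=; ring.
have y3 r : local_term p k y r.+3 = 0 by apply: local_term_vanish; rewrite py; lia.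
rewrite !sumR_shift scale y1 y2 (sumR_zero _ y3) !scale (sumR_ext _ (fun i => scale i.+2)).
rewrite sumR_scal !local_term0 /local_ratio; field.
by split=> //; have := pow2_ge_0 (INR p); lra.
Qed.

(* The same identity at p = 2, where the factor gcd(2^r, 2k)^2 doubles from
   4 to 16 for r >= 2, and the local sum for odd y is 1 + 1 + 1/2 = 5/2. *)
Lemma local_sum_two k x y m : (0 < k)%N -> ~~ (2 %| k)%N -> logn 2 (y ^ 2) = 0%N ->
  sumR (local_term 2 (2 * k) x) m.+3 =
  INR 2 ^ 2 * (sumR (local_term 2 k x) m.+3 - local_ratio 2 * sumR (local_term 2 k y) m.+3).
Proof.
move=> k0 pk py; have c2 : coprime 2 k by rewrite prime_coprime.
have g_k r : gcdn (2 ^ r.+1) (2 * k) = 2%N.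
  by rewrite -{2}(expn1 2) gcdn_prime_pow // (_ : minn r.+1 1 = 1%N) //; lia.
have g_2k r : gcdn (2 ^ r.+2) (2 * (2 * k)) = 4%N.
  by rewrite mulnA -(expnS 2 1) gcdn_prime_pow // (_ : minn r.+2 2 = 2%N) //; lia.
have g_2k1 : gcdn (2 ^ 1) (2 * (2 * k)) = 2%N by rewrite mulnA -(expnS 2 1) gcdn_prime_pow.
have x1 : local_term 2 k x 1 = 1 by rewrite /local_term /= g_k /gamma_pp /=; field.
have x1' : local_term 2 (2 * k) x 1 = 1 by rewrite /local_term /= g_2k1 /gamma_pp /=; field.
have scale r : local_term 2 (2 * k) x r.+2 = INR 2 ^ 2 * local_term 2 k x r.+2.
  by rewrite /local_term /= g_k g_2k /=; field; apply: INR_expn_neq0.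
have y1 : local_term 2 k y 1 = 1 by rewrite /local_term /= g_k /gamma_pp /=; field.
have y2 : local_term 2 k y 2 = 1 / 2 by rewrite /local_term /= g_k /gamma_pp py /=; field.
have y3 r : local_term 2 k y r.+3 = 0 by apply: local_term_vanish; rewrite py; lia.
rewrite !sumR_shift x1 x1' y1 y2 (sumR_zero _ y3) !scale (sumR_ext _ (fun i => scale i.+1)).
by rewrite sumR_scal !local_term0 /local_ratio /=; field.
Qed.

Lemma local_sum_step p k x y m : prime p -> (0 < k)%N -> ~~ (p %| k) ->
  logn p (y ^ 2) = 0%N ->
  sumR (local_term p (p * k) x) m.+3 =
  INR p ^ 2 * (sumR (local_term p k x) m.+3 - local_ratio p * sumR (local_term p k y) m.+3).
Proof.
move=> pp k0; have [->|p2] := eqVneq p 2%N; first exact: local_sum_two.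
exact: local_sum_odd.
Qed.

Lemma coprime_part_estar_pk p k x : prime p -> coprime_part p (estar_term (p * k) x) =1
  coprime_part p (estar_term k x).
Proof.
move=> pp b; rewrite /coprime_part /estar_term; case: ifP => // pb.
by rewrite mulnCA Gauss_gcdr // coprime_sym.
Qed.

Lemma coprime_part_estar_d_part p k d : prime p -> (0 < d)%N ->
  coprime_part p (estar_term k (d_part d p)) =1 coprime_part p (estar_term k d).
Proof.
move=> pp d0 b; rewrite /coprime_part /estar_term; case: ifP => // pb.
rewrite (@gamma_ext b _ (d ^ 2)) // => q qb; rewrite !lognX logn_d_part //.
rewrite primes_prime // mem_seq1; case: eqP => // qp.
by move: qb pb; rewrite qp mem_primes prime_coprime // => /and3P[_ _ ->].
Qed.

(* All three series share the same part prime to p, so by Euler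
   factorisation at p this reduces to the identity between local factors. *)
Lemma estar_prime_step p k d : prime p -> (0 < k)%N -> ~~ (p %| k) -> (0 < d)%N ->
  estar (p * k) d = INR p ^ 2 * (estar k d - local_ratio p * estar k (d_part d p)).
Proof.
move=> pp k0 pk d0; have pk0 : (0 < p * k)%N by rewrite muln_gt0 prime_gt0.
have [L cvL] := coprime_part_estar_cv p k0 d0.
have dp0 := d_part_gt0 p d0.
have vdp : logn p (d_part d p ^ 2) = 0%N.
  by rewrite lognX logn_d_part // primes_prime // mem_seq1 eqxx muln0.
set m := logn p (d ^ 2).
rewrite (@estar_euler p k d m.+3 L) ?addn3 //.
rewrite (@estar_euler p (p * k) d m.+3 L) ?addn3 //; last first.
  by apply: (Un_cv_ext _ _ _ _ cvL) => N; apply: sumR_ext => i; rewrite coprime_part_estar_pk.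
rewrite (@estar_euler p k (d_part d p) m.+3 L) ?vdp //; last first.
  by apply: (Un_cv_ext _ _ _ _ cvL) => N; apply: sumR_ext => i; rewrite coprime_part_estar_d_part.
by rewrite (local_sum_step _ _ pp k0 pk vdp); ring.
Qed.

Lemma primes_mul_prime p b : prime p -> (0 < b)%N -> ~~ (p %| b) ->
  perm_eq (primes (p * b)) (p :: primes b).
Proof.
move=> pp b0 pb; rewrite -{1}(expn1 p); apply: primes_pow_mul => //.
by rewrite prime_coprime.
Qed.

Lemma squarefree_mul p b : prime p -> (0 < b)%N -> ~~ (p %| b) ->
  squarefree (p * b) = squarefree b.
Proof.
move=> pp b0 pb; have p0 := prime_gt0 pp.
rewrite /squarefree (perm_all _ (primes_mul_prime pp b0 pb)) /=.
rewrite lognM // logn_prime // eqxx logn_coprime ?prime_coprime //=.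
apply: eq_in_all => q qb; rewrite lognM // logn_prime //.
case: (eqVneq q p) qb => [->|_ _] //.
by rewrite mem_primes (negbTE pb) !andbF.
Qed.

HB.instance Definition _ := Monoid.isComLaw.Build R R0 Rplus
  (fun a b c => esym (Rplus_assoc a b c)) Rplus_comm Rplus_0_l.
HB.instance Definition _ := Monoid.isComLaw.Build R R1 Rmult
  (fun a b c => esym (Rmult_assoc a b c)) Rmult_comm Rmult_1_l.

Lemma foldr_Rplus_perm (F : nat -> R) s1 s2 : perm_eq s1 s2 ->
  foldr Rplus 0 (map F s1) = foldr Rplus 0 (map F s2).
Proof. by move=> s12; rewrite !foldrE !big_map; apply: perm_big. Qed.

Lemma foldr_Rplus_cat (F : nat -> R) s1 s2 :
  foldr Rplus 0 (map F s1 ++ map F s2) = foldr Rplus 0 (map F s1) + foldr Rplus 0 (map F s2).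
Proof. by elim: s1 => /= [|x s ->]; ring. Qed.

Lemma foldr_Rplus_scal (F : nat -> R) c s :
  foldr Rplus 0 (map (fun x => c * F x) s) = c * foldr Rplus 0 (map F s).
Proof. by elim: s => /= [|x s ->]; ring. Qed.

Lemma foldr_Rmult_perm (F : nat -> R) s1 s2 : perm_eq s1 s2 ->
  foldr Rmult 1 (map F s1) = foldr Rmult 1 (map F s2).
Proof. by move=> s12; rewrite !foldrE !big_map; apply: perm_big. Qed.

Lemma mobius_mul p b : prime p -> (0 < b)%N -> ~~ (p %| b) ->
  mobius (p * b) = - mobius b.
Proof.
move=> pp b0 pb; rewrite /mobius squarefree_mul //.
by rewrite (perm_size (primes_mul_prime pp b0 pb)); case: ifP => _ /=; ring.
Qed.

Lemma prime_factor_prod_mul p b : prime p -> (0 < b)%N -> ~~ (p %| b) ->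
  prime_factor_prod (p * b) = local_ratio p * prime_factor_prod b.
Proof.
move=> pp b0 pb.
by rewrite /prime_factor_prod (foldr_Rmult_perm _ (primes_mul_prime pp b0 pb)).
Qed.

Lemma d_part_mul d p b : prime p -> (0 < d)%N -> (0 < b)%N -> ~~ (p %| b) ->
  d_part d (p * b) = d_part (d_part d p) b.
Proof.
move=> pp d0 b0 pb; have p0 := prime_gt0 pp.
apply: eqn_from_log; rewrite ?d_part_gt0 // => q.
rewrite !logn_d_part ?d_part_gt0 // primesM // primes_prime // mem_seq1.
by case: (q == p); case: (q \in primes b).
Qed.

Lemma divisors_mul_prime p k : prime p -> (0 < k)%N -> ~~ (p %| k) ->
  perm_eq (divisors (p * k)) (divisors k ++ map (muln p) (divisors k)).
Proof.
move=> pp k0 pk; have p0 := prime_gt0 pp.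
have pk0 : (0 < p * k)%N by rewrite muln_gt0 p0.
have mulpI : injective (muln p) by move=> a b /eqP; rewrite eqn_pmul2l // => /eqP.
have p_ndvd y : (y %| k)%N -> ~~ (p * y %| k)%N.
  by move=> yk; apply: contra pk; apply: dvdn_trans; apply: dvdn_mulr.
apply: uniq_perm; first exact: divisors_uniq.
  rewrite cat_uniq divisors_uniq (map_inj_uniq mulpI) divisors_uniq andbT /=.
  apply/hasPn => _ /mapP[y yk ->]; rewrite -dvdn_divisors //.
  by apply: p_ndvd; rewrite dvdn_divisors.
move=> x; rewrite mem_cat -!dvdn_divisors //.
have [/dvdnP[y ->]|px] := boolP (p %| x)%N.
  rewrite mulnC dvdn_pmul2l // (mem_map mulpI) -dvdn_divisors //.
  have [yk|yk] := boolP (y %| k)%N; first by rewrite orbT.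
  rewrite orbF; apply/esym/negbTE; apply: contra yk.
  exact: dvdn_trans (dvdn_mull p (dvdnn y)).
rewrite Gauss_dvdr; last by rewrite coprime_sym prime_coprime.
rewrite orbC; case: mapP => // [[y _ xE]].
by move: px; rewrite xE dvdn_mulr.
Qed.

Definition mobius_term (d m : nat) : R :=
  mobius m * prime_factor_prod m * estar 1 (d_part d m).

Definition divisor_sum (k : nat) (F : nat -> R) : R := foldr Rplus 0 (map F (divisors k)).

(* The right-hand side obeys the same recursion as e*: for p prime not
   dividing k, the divisors of pk are the m and the pm with m | k, and
   mobius_term d (pm) = -(p^2-1)/(p^2+1) mobius_term d_p m. *)
Lemma divisor_sum_step p k d : prime p -> (0 < k)%N -> ~~ (p %| k) -> (0 < d)%N ->
  divisor_sum (p * k) (mobius_term d) =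
  divisor_sum k (mobius_term d) - local_ratio p * divisor_sum k (mobius_term (d_part d p)).
Proof.
move=> pp k0 pk d0; rewrite /divisor_sum (foldr_Rplus_perm _ (divisors_mul_prime pp k0 pk)).
rewrite map_cat foldr_Rplus_cat.
have -> : map (mobius_term d) (map (muln p) (divisors k)) =
          map (fun m => - local_ratio p * mobius_term (d_part d p) m) (divisors k).
  rewrite -map_comp; apply/eq_in_map => m; rewrite -dvdn_divisors // => mk.
  have m0 : (0 < m)%N := dvdn_gt0 k0 mk.
  have pm : ~~ (p %| m) by apply: contra pk => /dvdn_trans; apply.
  by rewrite /= /mobius_term mobius_mul // prime_factor_prod_mul // d_part_mul //; ring.
by rewrite foldr_Rplus_scal; ring.
Qed.

Lemma squarefree_prime_factor k : (1 < k)%N -> squarefree k ->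
  exists p k', [/\ prime p, k = (p * k')%N, (0 < k')%N, ~~ (p %| k') & squarefree k'].
Proof.
move=> k1 sqk; set p := pdiv k; have pp : prime p := pdiv_prime k1.
have k0 : (0 < k)%N by lia.
have Ek : k = (p * (k %/ p))%N by rewrite mulnC divnK // pdiv_dvd.
have k'0 : (0 < k %/ p)%N by rewrite divn_gt0 ?pdiv_gt0 // pdiv_leq.
have pk1 : logn p k = 1%N.
  by apply/eqP; move/allP: sqk; apply; rewrite mem_primes pp k0 pdiv_dvd.
have pk' : ~~ (p %| k %/ p).
  by apply/negP => /(dvdn_mul (dvdnn p)); rewrite -Ek mulnn pfactor_dvdn // pk1.
exists p, (k %/ p); split=> //.
by rewrite -(squarefree_mul pp k'0 pk') -Ek.
Qed.

Close Scope R_scope.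

Theorem lemma5p3 (k d : nat) (hk : 0 < k) (hsq : squarefree k) (hd : 0 < d) :
  estar k d =
  Rmult (pow (INR k) 2)
   (foldr Rplus R0
     (map (fun m => Rmult (Rmult (mobius m) (prime_factor_prod m)) (estar 1 (d_part d m)))
          (divisors k))).
Proof.
change (estar k d = Rmult (pow (INR k) 2) (divisor_sum k (mobius_term d))).
move: d hd; elim/ltn_ind: k hk hsq => k IH k0 sqk d d0.
have [k_le1|k_gt1] := leqP k 1.
  have -> : k = 1%N by lia.
  have primes1 : primes 1 = [::] by apply/eqP; rewrite primes_eq0.
  rewrite /divisor_sum /= /mobius_term /mobius /squarefree /prime_factor_prod primes1 /=.
  by rewrite /d_part primes1 big_nil divn1; ring.
have [p [k' [pp Ek k'0 pk' sqk']]] := squarefree_prime_factor k_gt1 sqk.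
have k'k : (k' < k)%N by rewrite Ek ltn_Pmull // prime_gt1.
rewrite Ek estar_prime_step // divisor_sum_step // !IH ?d_part_gt0 // INR_muln.
ring.
Qed.
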